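(* Let $F$ be a $C^1$ function on $\mathbb R$ with $\lim_{x\to-\infty}F(x)=-1$ and $\lim_{x\to+\infty}F(x)=1$. If $f\in C^2(\mathbb T,\mathbb R)$ is non-degenerate, then $$\mathcal H^0(\{f=0\})=-\frac12\int_0^{2\pi}F'\Big(\frac{f'(x)}{f(x)}\Big)\Big(\frac{f'(x)}{f(x)}\Big)'\,dx,$$ where the integrand is defined at points with $f(x)\neq0$ and the integral is understood as the sum of the (improper) integrals over the finitely many open arcs between consecutive zeros of $f$.
   Context: $\mathbb T=\mathbb R/2\pi\mathbb Z$, functions on $\mathbb T$ are identified with $2\pi$-periodic functions on $\mathbb R$, and $\mathcal H^0(\{f=0\})$ is the number of zeros of $f$ in one period $[0,2\pi)$. Set $\eta_f(x):=\sqrt{f(x)^2+f'(x)^2}$; $f$ is non-degenerate if $\min_x\eta_f(x)>0$. *)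

From Stdlib Require Import Reals Lra List Sorting.Sorted.
From Coquelicot Require Import Coquelicot.
Open Scope R_scope.

Definition isC1 (F : R -> R) : Prop :=
  (forall x, ex_derive F x) /\ (forall x, continuous (Derive F) x).

Definition isC2 (f : R -> R) : Prop :=
  (forall x, ex_derive f x) /\ (forall x, ex_derive (Derive f) x) /\
  (forall x, continuous (Derive_n f 2) x).

(* f is 2*PI periodic (a function on the torus T) *)
Definition periodic2pi (f : R -> R) : Prop := forall x, f (x + 2 * PI) = f x.

Definition eta (f : R -> R) (x : R) : R := sqrt (f x ^ 2 + Derive f x ^ 2).

(* non-degenerate: min_x eta_f(x) > 0 (the min exists as eta_f is
   continuous and periodic; stated as a uniform positive lower bound) *)
Definition nondegenerate (f : R -> R) : Prop :=
  exists c, 0 < c /\ forall x, c <= eta f x.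

Definition zeros_list (f : R -> R) (zs : list R) : Prop :=
  Sorted Rlt zs /\ forall x, In x zs <-> (0 <= x < 2 * PI /\ f x = 0).

Fixpoint consec (a : R) (l : list R) : list (R * R) :=
  match l with
  | nil => nil
  | b :: l' => (a, b) :: consec b l'
  end.

(* open arcs between consecutive zeros, the last one wrapping around *)
Definition arcs (zs : list R) : list (R * R) :=
  match zs with
  | nil => nil
  | z :: l => consec z l ++ ((last l z, z + 2 * PI) :: nil)
  end.

Definition integrand (F f : R -> R) (x : R) : R :=
  let h := fun y => Derive f y / f y in
  Derive F (h x) * Derive h x.

Definition is_arc_integral (g : R -> R) (zs : list R) (I : R) : Prop :=
  match zs with
  | nil => is_RInt g 0 (2 * PI) I
  | _ :: _ => exists Is : list R,
      Forall2 (fun ab J => is_RInt_gen g (at_right (fst ab)) (at_left (snd ab)) J)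
              (arcs zs) Is
      /\ I = fold_right Rplus 0 Is
  end.

From Stdlib Require Import Reals Lra List Sorting.Sorted Rtopology Classical.
From Coquelicot Require Import Coquelicot.
Open Scope R_scope.

(* Write h = f'/f. Non-degeneracy makes every zero of f simple, so the zeros are
   uniformly separated (finitely many per period) and h has a pole at each zero,
   with h -> +oo to its right and h -> -oo to its left. Away from the zeros the
   integrand is the derivative of F o h, so over an arc between consecutive zeros
   the improper integral is F(-oo) - F(+oo) = -2, and there are as many arcs as
   zeros. If f has no zero, F o h is periodic and the integral vanishes. *)

Definition logderiv (f : R -> R) (x : R) : R := Derive f x / f x.

Lemma isC1_of_isC2 f : isC2 f -> isC1 f.
Proof.
  intros [Hd [Hdd _]]. split; [exact Hd|].
  intros x. exact (ex_derive_continuous (Derive f) x (Hdd x)).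
Qed.

Lemma isC1_continuous f x : isC1 f -> continuous f x.
Proof. intros [Hd _]. exact (ex_derive_continuous f x (Hd x)). Qed.

Lemma locally_nonzero (f : R -> R) (x : R) :
  continuous f x -> f x <> 0 -> locally x (fun y => f y <> 0).
Proof.
  intros Hc Hx.
  assert (Hpos : 0 < Rabs (f x)) by (apply Rabs_pos_lt, Hx).
  apply (filter_imp (fun y => Rabs (f y - f x) < Rabs (f x))).
  - intros y Hy Hy0. rewrite Hy0, Rminus_0_l, Rabs_Ropp in Hy. lra.
  - exact (proj1 (filterlim_locally _ _) Hc (mkposreal _ Hpos)).
Qed.

Lemma is_derive_logderiv f x : isC2 f -> f x <> 0 ->
  is_derive (logderiv f) x
    ((Derive (Derive f) x * f x - Derive f x * Derive f x) / f x ^ 2).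
Proof.
  intros [Hd [Hdd _]] Hx.
  apply is_derive_div; [apply Derive_correct, Hdd | apply Derive_correct, Hd | exact Hx].
Qed.

Lemma continuous_Derive_logderiv f x : isC2 f -> f x <> 0 ->
  continuous (Derive (logderiv f)) x.
Proof.
  intros Hf Hx.
  assert (Hc0 : continuity_pt f x)
    by apply continuity_pt_filterlim, isC1_continuous, isC1_of_isC2, Hf.
  assert (Hc1 : continuity_pt (Derive f) x)
    by apply continuity_pt_filterlim, (isC1_of_isC2 f Hf).
  assert (Hc2 : continuity_pt (Derive (Derive f)) x)
    by apply continuity_pt_filterlim, Hf.
  apply continuous_ext_loc with
    (fun y => (Derive (Derive f) y * f y - Derive f y * Derive f y) / f y ^ 2).
  - apply (filter_imp (fun y => f y <> 0)).
    + intros y Hy. symmetry. apply is_derive_unique, is_derive_logderiv; assumption.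
    + apply locally_nonzero; [apply continuity_pt_filterlim, Hc0 | exact Hx].
  - apply continuity_pt_filterlim, continuity_pt_div.
    + apply continuity_pt_minus; apply continuity_pt_mult; assumption.
    + apply continuity_pt_mult; [exact Hc0|].
      apply continuity_pt_mult; [exact Hc0 | apply continuity_pt_const; intros ? ?; reflexivity].
    + apply pow_nonzero, Hx.
Qed.

Lemma is_derive_comp_logderiv G f x : isC1 G -> isC2 f -> f x <> 0 ->
  is_derive (fun y => G (logderiv f y)) x (integrand G f x).
Proof.
  intros [HG _] Hf Hx.
  replace (integrand G f x) with (Derive (logderiv f) x * Derive G (logderiv f x))
    by (unfold integrand, logderiv; ring).
  apply (@is_derive_comp R_AbsRing R_NormedModule G (logderiv f) x); [apply Derive_correct, HG|].
  apply Derive_correct. eexists. apply is_derive_logderiv; assumption.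
Qed.

Lemma continuous_integrand G f x : isC1 G -> isC2 f -> f x <> 0 ->
  continuous (integrand G f) x.
Proof.
  intros [_ HG] Hf Hx.
  apply (continuous_mult (fun y => Derive G (logderiv f y)) (Derive (logderiv f))).
  - apply continuous_comp; [|apply HG].
    apply (ex_derive_continuous (logderiv f)). eexists. apply is_derive_logderiv; assumption.
  - apply continuous_Derive_logderiv; assumption.
Qed.

Lemma Derive_periodic f x : periodic2pi f -> Derive f (x + 2 * PI) = Derive f x.
Proof.
  intros Hper. unfold Derive. f_equal. apply Lim_ext. intros h.
  replace (x + 2 * PI + h) with (x + h + 2 * PI) by ring. rewrite !Hper. reflexivity.
Qed.

Lemma is_RInt_integrand_period G f : isC1 G -> isC2 f -> periodic2pi f ->
  (forall x, 0 <= x <= 2 * PI -> f x <> 0) -> is_RInt (integrand G f) 0 (2 * PI) 0.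
Proof.
  intros HG Hf Hper Hnz. pose proof PI_RGT_0.
  assert (Hftc := is_RInt_derive (fun y => G (logderiv f y)) (integrand G f) 0 (2 * PI)).
  rewrite Rmin_left, Rmax_right in Hftc by lra.
  assert (Hh : logderiv f (2 * PI) = logderiv f 0).
  { unfold logderiv. rewrite <- (Rplus_0_l (2 * PI)), Derive_periodic, Hper by exact Hper.
    reflexivity. }
  rewrite Hh, minus_eq_zero in Hftc.
  apply Hftc; intros x Hx.
  - apply is_derive_comp_logderiv; auto.
  - apply continuous_integrand; auto.
Qed.

Lemma ratio_gt_half p q c : c <> 0 ->
  Rabs (p - c) < Rabs c / 3 -> Rabs (q - c) < Rabs c / 3 -> 1 / 2 < p / q.
Proof.
  intros Hc Hp Hq.
  apply Rabs_def2 in Hp. apply Rabs_def2 in Hq.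
  destruct (Rlt_or_le 0 c) as [Hpos|Hneg].
  - rewrite Rabs_right in Hp, Hq by lra.
    apply Rmult_lt_reg_r with q; [lra|].
    replace (p / q * q) with p by (field; lra). lra.
  - rewrite Rabs_left in Hp, Hq by lra.
    apply Rmult_lt_reg_r with (- q); [lra|].
    replace (p / q * - q) with (- p) by (field; lra). lra.
Qed.

Lemma logderiv_near_simple_zero f z : isC1 f -> f z = 0 -> Derive f z <> 0 ->
  exists eps, 0 < eps /\
    forall x, 0 < Rabs (x - z) < eps -> 1 / 2 < logderiv f x * (x - z).
Proof.
  intros Hf Hz Hdz.
  assert (He : 0 < Rabs (Derive f z) / 3) by (apply Rabs_pos_lt in Hdz; lra).
  destruct (proj1 (filterlim_locally _ _) (proj2 Hf z) (mkposreal _ He)) as [d Hd].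
  exists d. split; [apply cond_pos|]. intros x [Hxz Hxd].
  (* f x = f' xi * (x - z), so logderiv f x * (x - z) = f' x / f' xi: a ratio of two
     values of f' close to f' z. *)
  destruct (MVT_gen f z x (Derive f)) as [xi [Hxi Hmvt]].
  { intros t _. apply Derive_correct, Hf. }
  { intros t _. apply continuity_pt_filterlim, isC1_continuous, Hf. }
  rewrite Hz, Rminus_0_r in Hmvt.
  assert (Hx : Rabs (Derive f x - Derive f z) < Rabs (Derive f z) / 3) by exact (Hd x Hxd).
  assert (Hxi' : Rabs (Derive f xi - Derive f z) < Rabs (Derive f z) / 3).
  { apply Hd. change (Rabs (xi - z) < d). apply Rabs_def2 in Hxd.
    unfold Rmin, Rmax in Hxi. destruct (Rle_dec z x); apply Rabs_def1; lra. }
  assert (Hx0 : x - z <> 0) by (intros E; rewrite E, Rabs_R0 in Hxz; lra).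
  unfold logderiv. rewrite Hmvt.
  replace (Derive f x / (Derive f xi * (x - z)) * (x - z)) with (Derive f x / Derive f xi).
  - exact (ratio_gt_half _ _ _ Hdz Hx Hxi').
  - field. split; [exact Hx0|].
    intros E. rewrite E, Rminus_0_l, Rabs_Ropp in Hxi'. lra.
Qed.

Lemma gt_of_half_lt_mul u t M :
  0 < t -> t * (2 * (Rabs M + 1)) < 1 -> 1 / 2 < u * t -> M < u.
Proof. intros Ht Hsmall Hut. pose proof (Rle_abs M). nra. Qed.

Lemma pole_limits (h : R -> R) z eps : 0 < eps ->
  (forall x, 0 < Rabs (x - z) < eps -> 1 / 2 < h x * (x - z)) ->
  filterlim h (at_right z) (Rbar_locally p_infty) /\
  filterlim h (at_left z) (Rbar_locally m_infty).
Proof.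
  intros Heps Hh.
  assert (Hnear : forall M, exists delta : posreal, forall x, Rabs (x - z) < delta ->
            (z < x -> M < h x) /\ (x < z -> h x < M)).
  { intros M. set (K := 2 * (Rabs M + 1)).
    assert (HK : 0 < K) by (pose proof (Rabs_pos M); unfold K; lra).
    assert (Hd : 0 < Rmin eps (/ K)) by (apply Rmin_pos; [lra | apply Rinv_0_lt_compat, HK]).
    exists (mkposreal _ Hd). simpl. intros x Hx.
    assert (Hsmall : Rabs (x - z) * K < 1).
    { rewrite <- (Rinv_l K) by lra. apply Rmult_lt_compat_r; [exact HK|].
      eapply Rlt_le_trans; [exact Hx | apply Rmin_r]. }
    assert (Hxe : Rabs (x - z) < eps) by (eapply Rlt_le_trans; [exact Hx | apply Rmin_l]).
    split; intros Hxz.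
    - rewrite Rabs_right in Hsmall, Hxe by lra.
      apply (gt_of_half_lt_mul _ (x - z)); [lra | exact Hsmall|].
      apply Hh. rewrite Rabs_right by lra. lra.
    - rewrite Rabs_left in Hsmall, Hxe by lra.
      apply Ropp_lt_cancel, (gt_of_half_lt_mul _ (z - x)); [lra | |].
      + rewrite Rabs_Ropp. fold K. lra.
      + replace (- h x * (z - x)) with (h x * (x - z)) by ring.
        apply Hh. rewrite Rabs_left by lra. lra. }
  split; intros P [M HM]; destruct (Hnear M) as [delta Hdelta];
    exists delta; intros x Hx Hxz; apply HM, Hdelta; auto.
Qed.

Lemma logderiv_pole f z : isC1 f -> f z = 0 -> Derive f z <> 0 ->
  filterlim (logderiv f) (at_right z) (Rbar_locally p_infty) /\
  filterlim (logderiv f) (at_left z) (Rbar_locally m_infty).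
Proof.
  intros Hf Hz Hdz.
  destruct (logderiv_near_simple_zero f z Hf Hz Hdz) as [eps [Heps Hbound]].
  exact (pole_limits _ _ _ Heps Hbound).
Qed.

Lemma filter_prod_arc a b (Q : R -> Prop) : a < b -> (forall x, a < x < b -> Q x) ->
  filter_prod (at_right a) (at_left b)
    (fun uv => forall x, Rmin (fst uv) (snd uv) <= x <= Rmax (fst uv) (snd uv) -> Q x).
Proof.
  intros Hab HQ. set (m := (a + b) / 2).
  assert (Hr : 0 < (b - a) / 2) by lra.
  apply Filter_prod with (fun u => a < u < m) (fun v => m < v < b).
  - exists (mkposreal _ Hr). intros u Hu Hau.
    change (Rabs (u - a) < (b - a) / 2) in Hu. apply Rabs_def2 in Hu. unfold m. lra.
  - exists (mkposreal _ Hr). intros v Hv Hvb.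
    change (Rabs (v - b) < (b - a) / 2) in Hv. apply Rabs_def2 in Hv. unfold m. lra.
  - intros u v Hu Hv x Hx. simpl in Hx.
    rewrite Rmin_left, Rmax_right in Hx by lra.
    apply HQ. lra.
Qed.

Lemma is_RInt_gen_integrand_arc G f a b :
  isC1 G -> is_lim G m_infty (-1) -> is_lim G p_infty 1 -> isC2 f ->
  a < b -> f a = 0 -> f b = 0 -> Derive f a <> 0 -> Derive f b <> 0 ->
  (forall x, a < x < b -> f x <> 0) ->
  is_RInt_gen (integrand G f) (at_right a) (at_left b) (-2).
Proof.
  intros HG Hm Hp Hf Hab Ha Hb Hda Hdb Hnz.
  set (Phi := fun y => G (logderiv f y)).
  assert (HPhi : forall x, a < x < b -> is_derive Phi x (integrand G f x))
    by (intros x Hx; apply is_derive_comp_logderiv, Hnz; assumption).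
  apply (is_RInt_gen_ext (Derive Phi)).
  { eapply filter_imp; [|exact (filter_prod_arc _ _ _ Hab HPhi)].
    intros [u v] Hder x Hx. apply is_derive_unique, Hder. simpl in *. lra. }
  replace (-2) with (-1 - 1) by ring.
  apply is_RInt_gen_Derive.
  - eapply filter_imp; [|exact (filter_prod_arc _ _ _ Hab HPhi)].
    intros uv Hder x Hx. eexists. exact (Hder x Hx).
  - apply filter_prod_arc; [exact Hab|]. intros x Hx.
    apply continuous_ext_loc with (integrand G f).
    + apply (filter_imp (fun y => f y <> 0)).
      * intros y Hy. symmetry. apply is_derive_unique, is_derive_comp_logderiv; assumption.
      * apply locally_nonzero, Hnz, Hx. apply isC1_continuous, isC1_of_isC2, Hf.
    + apply continuous_integrand, Hnz, Hx; assumption.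
  - apply filterlim_comp with (1 := proj1 (logderiv_pole f a (isC1_of_isC2 f Hf) Ha Hda)).
    exact Hp.
  - apply filterlim_comp with (1 := proj2 (logderiv_pole f b (isC1_of_isC2 f Hf) Hb Hdb)).
    exact Hm.
Qed.

Lemma nondegenerate_zero_bound f : nondegenerate f ->
  exists c, 0 < c /\ forall z, f z = 0 -> c <= Rabs (Derive f z).
Proof.
  intros [c [Hc Heta]]. exists c. split; [exact Hc|]. intros z Hz.
  specialize (Heta z). unfold eta in Heta. rewrite Hz in Heta.
  replace (0 ^ 2 + Derive f z ^ 2) with (Rsqr (Derive f z)) in Heta by (unfold Rsqr; ring).
  rewrite sqrt_Rsqr_abs in Heta. exact Heta.
Qed.

Definition separated (P : R -> Prop) (d : R) : Prop :=
  forall x y, P x -> P y -> Rabs (x - y) < d -> x = y.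

Lemma zeros_separated f c a b : isC1 f -> 0 < c ->
  (forall z, f z = 0 -> c <= Rabs (Derive f z)) ->
  exists d, 0 < d /\ separated (fun x => a <= x <= b /\ f x = 0) d.
Proof.
  intros Hf Hc Hbound.
  assert (Hc2 : 0 < c / 2) by lra.
  destruct (Heine (Derive f) (fun t => a <= t <= b) (compact_P3 a b)
              (fun t _ => proj2 (continuity_pt_filterlim _ _) (proj2 Hf t))
              (mkposreal _ Hc2)) as [d Hd].
  exists d. split; [apply cond_pos|].
  (* By Rolle, zeros x < y closer than d give a zero of f' within d of x, contradicting
     |f' x| >= c and the uniform continuity of f'. *)
  assert (Hlt : forall x y, a <= x <= b -> a <= y <= b -> f x = 0 -> f y = 0 ->
                  Rabs (x - y) < d -> ~ x < y).
  { intros x y Hx Hy Fx Fy Hxy Hlt.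
    destruct (MVT_gen f x y (Derive f)) as [xi [Hxi Hmvt]].
    { intros t _. apply Derive_correct, Hf. }
    { intros t _. apply continuity_pt_filterlim, isC1_continuous, Hf. }
    rewrite Rmin_left, Rmax_right in Hxi by lra.
    rewrite Fx, Fy, Rminus_0_r in Hmvt.
    assert (Hxi0 : Derive f xi = 0)
      by (apply (Rmult_eq_reg_r (y - x)); lra).
    assert (Hclose : Rabs (Derive f x - Derive f xi) < c / 2).
    { apply Hd; try lra. apply Rabs_def2 in Hxy. apply Rabs_def1; lra. }
    specialize (Hbound x Fx). rewrite Hxi0, Rminus_0_r in Hclose. lra. }
  intros x y [Hx Fx] [Hy Fy] Hxy.
  destruct (Rtotal_order x y) as [Hxy'|[Heq|Hxy']]; [| exact Heq |].
  - exfalso. exact (Hlt x y Hx Hy Fx Fy Hxy Hxy').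
  - exfalso. rewrite Rabs_minus_sym in Hxy. exact (Hlt y x Hy Hx Fy Fx Hxy Hxy').
Qed.

Lemma separated_enum_window P d : 0 < d -> separated P d ->
  forall n a, exists l, Sorted Rlt l /\
    forall x, In x l <-> a <= x < a + INR n * d /\ P x.
Proof.
  intros Hd Hsep n. induction n as [|n IH]; intros a.
  - exists nil. split; [constructor|]. intros x. simpl. lra.
  - destruct (IH (a + d)) as [l [Hs Hl]].
    assert (Hnd : 0 <= INR n * d) by (apply Rmult_le_pos; [apply pos_INR | lra]).
    rewrite S_INR, Rmult_plus_distr_r, Rmult_1_l.
    destruct (classic (exists z, a <= z < a + d /\ P z)) as [[z [Hz Pz]]|Hnone].
    + exists (z :: l). split.
      * constructor; [exact Hs|]. destruct l as [|y l]; constructor.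
        assert (Hy : a + d <= y) by apply Hl, in_eq. lra.
      * intros x. simpl In. rewrite Hl. split.
        -- intros [<-|[Hx Px]]; split; auto; lra.
        -- intros [Hx Px]. destruct (Rlt_or_le x (a + d)) as [Hxd|Hxd].
           ++ left. apply Hsep; auto. apply Rabs_def1; lra.
           ++ right. split; [lra | exact Px].
    + exists l. split; [exact Hs|]. intros x. rewrite Hl. split.
      * intros [Hx Px]. split; [lra | exact Px].
      * intros [Hx Px]. destruct (Rlt_or_le x (a + d)) as [Hxd|Hxd].
        -- exfalso. apply Hnone. exists x. split; [lra | exact Px].
        -- split; [lra | exact Px].
Qed.

Lemma separated_enum P d a b : 0 < d -> separated P d ->
  exists l, Sorted Rlt l /\ forall x, In x l <-> a <= x < b /\ P x.
Proof.
  intros Hd Hsep.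
  destruct (INR_unbounded ((b - a) / d)) as [n Hn].
  assert (Hnd : b - a < INR n * d).
  { apply (Rmult_lt_compat_r d) in Hn; [|exact Hd].
    unfold Rdiv in Hn. rewrite Rmult_assoc, Rinv_l, Rmult_1_r in Hn by lra. lra. }
  destruct (separated_enum_window (fun x => P x /\ x < b) d Hd) with n a as [l [Hs Hl]].
  { intros x y [Px _] [Py _]. apply Hsep; assumption. }
  exists l. split; [exact Hs|]. intros x. rewrite Hl.
  split; [intros [Hx [Px Hxb]] | intros [Hx Px]]; repeat split; auto; lra.
Qed.

Lemma zeros_list_exists f : isC1 f -> nondegenerate f -> exists zs, zeros_list f zs.
Proof.
  intros Hf Hnd.
  destruct (nondegenerate_zero_bound f Hnd) as [c [Hc Hbound]].
  destruct (zeros_separated f c 0 (2 * PI) Hf Hc Hbound) as [d [Hd Hsep]].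
  destruct (separated_enum _ d 0 (2 * PI) Hd Hsep) as [zs [Hs Hzs]].
  exists zs. split; [exact Hs|]. intros x. rewrite Hzs.
  split; [intros [Hx [_ Fx]] | intros [Hx Fx]]; repeat split; auto; lra.
Qed.

Lemma zeros_list_nil f x : periodic2pi f -> zeros_list f nil ->
  0 <= x <= 2 * PI -> f x <> 0.
Proof.
  intros Hper [_ Hzs] Hx Fx. pose proof PI_RGT_0.
  destruct (Req_dec x (2 * PI)) as [->|Hne].
  - apply (Hzs 0). split; [lra|]. rewrite <- Hper, Rplus_0_l. exact Fx.
  - apply (Hzs x). split; [lra | exact Fx].
Qed.

Lemma last_cons {A : Type} (l : list A) (b z : A) : last (b :: l) z = last l b.
Proof.
  revert b z. induction l as [|c l IH]; intros b z; [reflexivity|].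
  change (last (c :: l) z = last (c :: l) b). rewrite !IH. reflexivity.
Qed.

Lemma In_last {A : Type} (l : list A) (z : A) : In (last l z) (z :: l).
Proof.
  revert z. induction l as [|b l IH]; intros z; [now left|].
  rewrite last_cons. right. apply IH.
Qed.

Lemma Sorted_Rlt_head_le z l y : Sorted Rlt (z :: l) -> In y (z :: l) -> z <= y.
Proof.
  intros Hs [<-|Hy]; [lra|].
  apply Sorted_extends in Hs; [|intros u v w; lra].
  apply Rlt_le. exact (proj1 (Forall_forall _ _) Hs y Hy).
Qed.

Lemma Sorted_Rlt_le_last z l y : Sorted Rlt (z :: l) -> In y (z :: l) -> y <= last l z.
Proof.
  revert z y. induction l as [|b l IH]; intros z y Hs Hy.
  - destruct Hy as [<-|[]]. simpl. lra.
  - rewrite last_cons. apply Sorted_inv in Hs as [Hs Hzb]. apply HdRel_inv in Hzb.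
    destruct Hy as [<-|Hy].
    + assert (b <= last l b) by (apply IH; [exact Hs | left; reflexivity]). lra.
    + apply IH; assumption.
Qed.

Lemma consec_gap z l a b : Sorted Rlt (z :: l) -> In (a, b) (consec z l) ->
  a < b /\ In a (z :: l) /\ In b (z :: l) /\ forall y, In y (z :: l) -> ~ (a < y < b).
Proof.
  revert z. induction l as [|c l IH]; intros z Hs Hab; [destruct Hab|].
  apply Sorted_inv in Hs as [Hs Hzc]. apply HdRel_inv in Hzc.
  destruct Hab as [Eab|Hab].
  - injection Eab as <- <-. split; [exact Hzc|].
    split; [now left|]. split; [now right; left|].
    intros y [<-|Hy]; [lra|].
    pose proof (Sorted_Rlt_head_le _ _ _ Hs Hy). lra.
  - destruct (IH c Hs Hab) as (Hlt & Ha & Hb & Hgap).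
    split; [exact Hlt|]. split; [now right|]. split; [now right|].
    intros y [<-|Hy]; [|exact (Hgap y Hy)].
    pose proof (Sorted_Rlt_head_le _ _ _ Hs Ha). lra.
Qed.

Lemma arcs_zero_free f z l : periodic2pi f -> zeros_list f (z :: l) ->
  forall a b, In (a, b) (arcs (z :: l)) ->
  a < b /\ f a = 0 /\ f b = 0 /\ forall x, a < x < b -> f x <> 0.
Proof.
  intros Hper [Hs Hzs] a b Hab. pose proof PI_RGT_0.
  apply in_app_or in Hab as [Hab|[Eab|[]]].
  - destruct (consec_gap z l a b Hs Hab) as (Hlt & Ha & Hb & Hgap).
    apply Hzs in Ha as [Ha Fa]. apply Hzs in Hb as [Hb Fb].
    split; [exact Hlt|]. split; [exact Fa|]. split; [exact Fb|].
    intros x Hx Fx. apply (Hgap x); [apply Hzs; split; [lra | exact Fx] | exact Hx].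
  - injection Eab as <- <-.
    destruct (proj1 (Hzs z) (in_eq _ _)) as [Hz Fz].
    destruct (proj1 (Hzs _) (In_last l z)) as [Hlast Flast].
    split; [lra|]. split; [exact Flast|]. split; [rewrite Hper; exact Fz|].
    intros x Hx Fx. destruct (Rlt_or_le x (2 * PI)) as [Hx2|Hx2].
    + assert (Hin : In x (z :: l)) by (apply Hzs; split; [lra | exact Fx]).
      pose proof (Sorted_Rlt_le_last _ _ _ Hs Hin). lra.
    + assert (Hin : In (x - 2 * PI) (z :: l)).
      { apply Hzs. split; [lra|]. rewrite <- Hper. replace (x - 2 * PI + 2 * PI) with x by ring.
        exact Fx. }
      pose proof (Sorted_Rlt_head_le _ _ _ Hs Hin). lra.
Qed.

Lemma length_consec (z : R) (l : list R) : length (consec z l) = length l.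
Proof. revert z. induction l as [|b l IH]; intros z; simpl; auto. Qed.

Lemma length_arcs zs : length (arcs zs) = length zs.
Proof.
  destruct zs as [|z l]; [reflexivity|].
  unfold arcs. rewrite length_app, length_consec, Nat.add_1_r. reflexivity.
Qed.

Lemma Forall2_repeat {A B : Type} (P : A -> B -> Prop) (c : B) (l : list A) :
  (forall a, In a l -> P a c) -> Forall2 P l (repeat c (length l)).
Proof.
  induction l as [|a l IH]; intros H; constructor.
  - apply H, in_eq.
  - apply IH. intros x Hx. apply H, in_cons, Hx.
Qed.

Lemma fold_right_Rplus_repeat (c : R) (n : nat) :
  fold_right Rplus 0 (repeat c n) = INR n * c.
Proof.
  induction n as [|n IH]; [simpl; ring|].
  cbn [repeat fold_right]. rewrite IH, S_INR. ring.
Qed.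

Theorem proposition2 (G f : R -> R) :
  isC1 G ->
  is_lim G m_infty (-1) ->
  is_lim G p_infty 1 ->
  isC2 f -> periodic2pi f -> nondegenerate f ->
  exists (zs : list R) (I : R),
    zeros_list f zs /\
    is_arc_integral (integrand G f) zs I /\
    INR (length zs) = - (1 / 2) * I.
Proof.
  intros HG Hm Hp Hf Hper Hnd.
  assert (Hsimple : forall z, f z = 0 -> Derive f z <> 0).
  { destruct (nondegenerate_zero_bound f Hnd) as [c [Hc Hbound]].
    intros z Fz Dz. specialize (Hbound z Fz). rewrite Dz, Rabs_R0 in Hbound. lra. }
  destruct (zeros_list_exists f (isC1_of_isC2 f Hf) Hnd) as [[|z l] Hzs].
  - exists nil, 0. split; [exact Hzs|]. split; [|simpl; ring].
    apply is_RInt_integrand_period; auto.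
    intros x. apply zeros_list_nil; assumption.
  - set (n := length (arcs (z :: l))).
    exists (z :: l), (INR n * -2). split; [exact Hzs|]. split.
    + exists (repeat (-2) n). split; [|symmetry; apply fold_right_Rplus_repeat].
      apply Forall2_repeat. intros [a b] Hab.
      destruct (arcs_zero_free f z l Hper Hzs a b Hab) as (Hlt & Fa & Fb & Hgap).
      apply is_RInt_gen_integrand_arc; auto.
    + unfold n. rewrite length_arcs. field.
Qed.
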